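(* Let $X$ be a nonnegative random variable with support $(0,+\infty)$, having finite CIGF $G_X(\alpha,\beta)$ for $(\alpha,\beta)\in D_X$. Assume the moment generating function $M_X(s)=\mathbb{E}(e^{sX})$ satisfies $M_X(s)<+\infty$ for all $s\in(-s_0,s_0)$, for some $s_0>0$. Then: (i) for all $s_1\in(-s_0,0)$, $s_2\in(0,s_0)$ and $(\alpha,\beta)\in D_X$ with $\alpha>0,\beta>0$ and $\alpha s_1+\beta s_2>0$, $$G_X(\alpha,\beta)\le\frac{1}{\alpha s_1+\beta s_2}[M_X(s_1)]^\alpha[M_X(s_2)]^\beta;$$ (ii) for all $s_1\in(-s_0,0)$, $s_2\in(0,s_0)$ and $(\alpha,\beta)\in D_X$ with $\alpha<0,\beta<0$ and $\alpha s_1+\beta s_2>0$, $$G_X(\alpha,\beta)\ge\frac{1}{\alpha s_1+\beta s_2}[M_X(s_1)]^\alpha[M_X(s_2)]^\beta.$$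
   Context: For a random variable $X$ with CDF $F$ and survival function $\overline F=1-F$, let $l=\inf\{x:F(x)>0\}$, $r=\sup\{x:\overline F(x)>0\}$. The CIGF of $X$ is $G_X(\alpha,\beta)=\int_l^r [F(x)]^\alpha[\overline F(x)]^\beta\,dx$ on $D_X=\{(\alpha,\beta)\in\mathbb{R}^2: G_X(\alpha,\beta)<\infty\}$. *)

From mathcomp Require Import all_boot all_order all_algebra.
From mathcomp Require Import all_classical all_reals all_analysis.
Set Implicit Arguments. Unset Strict Implicit. Unset Printing Implicit Defensive.
Import Order.TTheory GRing.Theory Num.Theory.
Local Open Scope classical_set_scope.
Local Open Scope ring_scope.

Section CIGF.
Context d (T : measurableType d) (R : realType) (P : probability T R).

Definition cdfR (X : {RV P >-> R}) (x : R) : R := fine (cdf X x).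
Definition survR (X : {RV P >-> R}) (x : R) : R := 1 - cdfR X x.

Definition lsupp (X : {RV P >-> R}) : \bar R :=
  ereal_inf [set x%:E | x in [set x | 0 < cdfR X x]].
Definition rsupp (X : {RV P >-> R}) : \bar R :=
  ereal_sup [set x%:E | x in [set x | 0 < survR X x]].

Definition CIGF (X : {RV P >-> R}) (a b : R) : \bar R :=
  (\int[lebesgue_measure]_(x in [set x : R | (lsupp X < x%:E < rsupp X)%E])
     ((cdfR X x) `^ a * (survR X x) `^ b)%:E)%E.

Definition in_DX (X : {RV P >-> R}) (a b : R) : Prop := (CIGF X a b < +oo)%E.

Definition mgf (X : {RV P >-> R}) (s : R) : \bar R :=
  'E_P[fun w => expR (s * X w)].

End CIGF.

(** Chernoff's bound gives, for [s1 < 0 < s2] and every [x], [F(x) <= M(s1) e^(-s1 x)]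
    and [Fbar(x) <= M(s2) e^(-s2 x)]. On the support both sides are positive, so in
    logarithmic coordinates [a ln F(x) + b ln Fbar(x)] is bounded above (when [a, b > 0])
    or below (when [a, b < 0]) by [a ln M(s1) + b ln M(s2) - (a s1 + b s2) x].
    Exponentiating and integrating [e^(-(a s1 + b s2) x)] over [(0, +oo)] produces the
    factor [1 / (a s1 + b s2)]. *)

From HB Require Import structures.
From mathcomp Require Import all_boot all_order all_algebra.
From mathcomp Require Import all_classical all_reals all_analysis.
From mathcomp Require Import lra measurable_realfun.
Set Implicit Arguments. Unset Strict Implicit. Unset Printing Implicit Defensive.
Import Order.TTheory GRing.Theory Num.Theory.
Local Open Scope classical_set_scope.
Local Open Scope ring_scope.

Section chernoff_cdf.
Context d (T : measurableType d) (R : realType) (P : probability T R).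
Variable X : {RV P >-> R}.

Lemma measurable_preimage_RV (Y : {RV P >-> R}) (A : set R) :
  measurable A -> measurable (Y @^-1` A).
Proof. by move=> mA; have := measurable_funPT Y measurableT _ mA; rewrite setTI. Qed.

Lemma mgf_ge0 s : (0 <= mgf X s)%E.
Proof. by rewrite /mgf unlock; apply: integral_ge0 => w _; rewrite lee_fin expR_ge0. Qed.

Lemma fineK_mgf s : (mgf X s < +oo)%E -> (fine (mgf X s))%:E = mgf X s.
Proof. by move=> mgf_fin; rewrite fineK // ge0_fin_numE // mgf_ge0. Qed.

Lemma cdfRE x : (cdfR X x)%:E = cdf X x.
Proof. by rewrite /cdfR fineK // fin_num_measure. Qed.

Lemma survRE x : (survR X x)%:E = ccdf X x.
Proof. by rewrite ccdf_1_cdf -cdfRE /survR EFinB. Qed.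

Lemma measurable_cdfR : measurable_fun [set: R] (cdfR X).
Proof. by apply: measurableT_comp => //; exact: cdf_measurable. Qed.

Lemma measurable_survR : measurable_fun [set: R] (survR X).
Proof. by apply: measurable_funB => //; exact: measurable_cdfR. Qed.

Lemma cdfR_nondecreasing : nondecreasing_fun (cdfR X).
Proof. by move=> x y xy; rewrite -lee_fin !cdfRE; exact: cdf_nondecreasing. Qed.

Lemma cdfR_gt0 x : (lsupp X < x%:E)%E -> 0 < cdfR X x.
Proof.
move=> lsupp_lt_x; rewrite ltNge; apply/negP => cdfx_le0.
suff : (x%:E <= lsupp X)%E by rewrite leNgt lsupp_lt_x.
apply: le_ereal_inf_tmp => _ [y /= cdfy_gt0 <-]; rewrite lee_fin leNgt.
apply/negP => /ltW /cdfR_nondecreasing; lra.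
Qed.

Lemma survR_gt0 x : (x%:E < rsupp X)%E -> 0 < survR X x.
Proof.
move=> x_lt_rsupp; rewrite ltNge; apply/negP => survx_le0.
suff : (rsupp X <= x%:E)%E by rewrite leNgt x_lt_rsupp.
apply: ge_ereal_sup => _ [y /= survy_gt0 <-]; rewrite lee_fin leNgt.
apply/negP => /ltW /cdfR_nondecreasing; rewrite /survR in survx_le0 survy_gt0; lra.
Qed.

Lemma survR_chernoff s x : 0 < s -> (mgf X s < +oo)%E ->
  survR X x <= fine (mgf X s) * expR (- (s * x)).
Proof.
move=> s_gt0 mgf_fin; rewrite -lee_fin EFinM fineK_mgf // survRE.
have -> : mgf X s = 'M_P X s.
  rewrite /mgf /mmt_gen_fun; congr expectation.
  by apply: funext => w /=; rewrite mulrC.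
have := @chernoff _ _ _ P X s x s_gt0; apply: le_trans.
rewrite /ccdf /distribution /pushforward; apply: le_measure; rewrite ?inE.
- by apply: measurable_preimage_RV.
- rewrite [A in measurable A](_ : _ = X @^-1` `[x, +oo[).
    exact: measurable_preimage_RV.
  by apply: funext => w /=; rewrite in_itv /= andbT.
- by move=> w /=; rewrite in_itv /= andbT => /ltW.
Qed.

Definition oppRV (w : T) : R := - X w.

Let measurable_oppRV : measurable_fun [set: T] oppRV.
Proof. exact: measurableT_comp. Qed.

HB.instance Definition _ := isMeasurableFun.Build _ _ T R oppRV measurable_oppRV.

(* The left tail [X <= x] is the right tail [-X >= -x]. *)
Lemma cdfR_chernoff s x : s < 0 -> (mgf X s < +oo)%E ->
  cdfR X x <= fine (mgf X s) * expR (- (s * x)).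
Proof.
move=> s_lt0 mgf_fin; rewrite -lee_fin EFinM fineK_mgf // cdfRE.
have := @chernoff _ _ _ P (oppRV : {RV P >-> R}) (- s) (- x).
rewrite oppr_gt0 mulrNN => /(_ s_lt0).
have -> : 'M_P (oppRV : {RV P >-> R}) (- s) = mgf X s.
  rewrite /mgf /mmt_gen_fun; congr expectation.
  by apply: funext => w /=; rewrite /oppRV mulrNN mulrC.
apply: le_trans.
rewrite /cdf /distribution /pushforward; apply: le_measure; rewrite ?inE.
- by apply: measurable_preimage_RV.
- rewrite [A in measurable A](_ : _ = (oppRV : {RV P >-> R}) @^-1` `[- x, +oo[).
    exact: measurable_preimage_RV.
  by apply: funext => w /=; rewrite in_itv /= andbT.
- by move=> w /=; rewrite in_itv /= /oppRV lerN2.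
Qed.

End chernoff_cdf.

Section exponential_integral.
Context (R : realType).
Local Notation mu := (@lebesgue_measure R).

Lemma measurable_scaled_expR (K c : R) :
  measurable_fun [set: R] (fun x => K * expR (- (c * x))).
Proof. by apply: measurable_funM => //; do 2 apply: measurableT_comp => //. Qed.

(* [K e^(-c x)] is [K / c] times the density of the exponential law of rate [c]. *)
Lemma integral_scaled_expR (c K : R) : 0 < c -> 0 <= K ->
  (\int[mu]_(x in `]0%R, +oo[) (K * expR (- (c * x)))%:E = (K / c)%:E)%E.
Proof.
move=> c_gt0 K_ge0.
rewrite integral_itv_obnd_cbnd; last first.
  by apply/measurable_EFinP; apply: measurable_funTS; exact: measurable_scaled_expR.
transitivity (\int[mu]_(x in `[0%R, +oo[) ((K / c)%:E * (exponential_pdf c x)%:E))%E.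
  apply: eq_integral => x; rewrite inE /= in_itv /= andbT => x_ge0.
  by rewrite exponential_pdfE ?(ltW c_gt0) // -EFinM mulNr mulrA divfK ?gt_eqF.
rewrite ge0_integralZl_EFin ?divr_ge0 ?(ltW c_gt0) //; last 2 first.
- by move=> x _; rewrite lee_fin; exact: exponential_pdf_ge0 (ltW c_gt0) x.
- by apply/measurable_EFinP; apply: measurable_funTS; exact: measurable_exponential_pdf.
rewrite integral_mkcond restrict_EFin.
have -> : exponential_pdf c \_ `[0, +oo[ = exponential_pdf c.
  apply: funext => x; rewrite patchE; case: ifPn => // /negP x_notin.
  rewrite lt0_exponential_pdf // ltNge; apply/negP => x_ge0; apply: x_notin.
  by rewrite inE /= in_itv /= andbT.
by rewrite integral_exponential_pdf // mule1.
Qed.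

Lemma le_integral_scaled_expR (f : R -> R) (c K : R) : 0 < c -> 0 <= K ->
  measurable_fun [set: R] f -> (forall x, 0 <= f x) ->
  (forall x, 0 < x -> f x <= K * expR (- (c * x))) ->
  (\int[mu]_(x in `]0%R, +oo[) (f x)%:E <= (K / c)%:E)%E.
Proof.
move=> c_gt0 K_ge0 mf f_ge0 f_le; rewrite -integral_scaled_expR //.
apply: ge0_le_integral => //.
- by move=> x _; rewrite lee_fin.
- by apply/measurable_EFinP; exact: measurable_funTS.
- by apply/measurable_EFinP; apply: measurable_funTS; exact: measurable_scaled_expR.
- by move=> x; rewrite /= in_itv /= andbT => x_gt0; rewrite lee_fin f_le.
Qed.

Lemma ge_integral_scaled_expR (f : R -> R) (c K : R) : 0 < c -> 0 <= K ->
  measurable_fun [set: R] f ->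
  (forall x, 0 < x -> K * expR (- (c * x)) <= f x) ->
  ((K / c)%:E <= \int[mu]_(x in `]0%R, +oo[) (f x)%:E)%E.
Proof.
move=> c_gt0 K_ge0 mf f_ge; rewrite -integral_scaled_expR //.
apply: ge0_le_integral => //.
- by move=> x _; rewrite lee_fin mulr_ge0 ?expR_ge0.
- by apply/measurable_EFinP; apply: measurable_funTS; exact: measurable_scaled_expR.
- by apply/measurable_EFinP; exact: measurable_funTS.
- by move=> x; rewrite /= in_itv /= andbT => x_gt0; rewrite lee_fin f_ge.
Qed.

End exponential_integral.

Section power_bounds.
Context (R : realType).

Lemma powR_expR (u a : R) : 0 < u -> u `^ a = expR (a * ln u).
Proof. by move=> u_gt0; rewrite /powR gt_eqF. Qed.

Lemma ln_le_mul_expR {F M s x : R} : 0 < F -> 0 < M ->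
  F <= M * expR (- (s * x)) -> ln F <= ln M - s * x.
Proof.
move=> F_gt0 M_gt0.
have Me_gt0 : 0 < M * expR (- (s * x)) by rewrite mulr_gt0 ?expR_gt0.
by rewrite -ler_ln ?posrE // lnM ?posrE ?expR_gt0 // expRK.
Qed.

Section product_of_powers.
Variables (F S M1 M2 s1 s2 x : R).
Hypotheses (F_gt0 : 0 < F) (S_gt0 : 0 < S).
Hypotheses (F_le : F <= M1 * expR (- (s1 * x))) (S_le : S <= M2 * expR (- (s2 * x))).

Let M1_gt0 : 0 < M1.
Proof. by have := lt_le_trans F_gt0 F_le; rewrite pmulr_lgt0 // expR_gt0. Qed.

Let M2_gt0 : 0 < M2.
Proof. by have := lt_le_trans S_gt0 S_le; rewrite pmulr_lgt0 // expR_gt0. Qed.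

Let lnF_le := ln_le_mul_expR F_gt0 M1_gt0 F_le.
Let lnS_le := ln_le_mul_expR S_gt0 M2_gt0 S_le.

Lemma gt0_powR_mul_le (a b : R) : 0 < a -> 0 < b ->
  F `^ a * S `^ b <= M1 `^ a * M2 `^ b * expR (- ((a * s1 + b * s2) * x)).
Proof.
move=> a_gt0 b_gt0; move: lnF_le lnS_le; rewrite !powR_expR // -!expRD ler_expR; nra.
Qed.

Lemma lt0_powR_mul_ge (a b : R) : a < 0 -> b < 0 ->
  M1 `^ a * M2 `^ b * expR (- ((a * s1 + b * s2) * x)) <= F `^ a * S `^ b.
Proof.
move=> a_lt0 b_lt0; move: lnF_le lnS_le; rewrite !powR_expR // -!expRD ler_expR; nra.
Qed.

End product_of_powers.

End power_bounds.

Section CIGF_mgf_bounds.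
Context d (T : measurableType d) (R : realType) (P : probability T R).
Variables (X : {RV P >-> R}) (s1 s2 : R).
Hypotheses (lsupp0 : lsupp X = 0%:E) (rsuppy : rsupp X = +oo%E).
Hypotheses (s1_lt0 : s1 < 0) (s2_gt0 : 0 < s2).
Hypotheses (mgf_s1_fin : (mgf X s1 < +oo)%E) (mgf_s2_fin : (mgf X s2 < +oo)%E).

Local Notation M1 := (fine (mgf X s1)).
Local Notation M2 := (fine (mgf X s2)).

Lemma CIGF_itv0y a b :
  CIGF X a b = (\int[lebesgue_measure]_(x in `]0%R, +oo[)
                 (cdfR X x `^ a * survR X x `^ b)%:E)%E.
Proof.
rewrite /CIGF lsupp0 rsuppy; congr integral; apply/seteqP.
by split => x /=; rewrite in_itv /= andbT lte_fin ltry andbT.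
Qed.

Let measurable_integrand a b :
  measurable_fun [set: R] (fun x => cdfR X x `^ a * survR X x `^ b).
Proof.
apply: measurable_funM; apply: measurableT_comp (measurable_powR _) _.
  exact: measurable_cdfR.
exact: measurable_survR.
Qed.

Let cdfR_pos x : 0 < x -> 0 < cdfR X x.
Proof. by move=> x_gt0; apply: cdfR_gt0; rewrite lsupp0 lte_fin. Qed.

Let survR_pos x : 0 < survR X x.
Proof. by apply: survR_gt0; rewrite rsuppy ltry. Qed.

Let cdfR_le x := cdfR_chernoff x s1_lt0 mgf_s1_fin.
Let survR_le x := survR_chernoff x s2_gt0 mgf_s2_fin.

Let scaled_mgf_powR a b : (a * s1 + b * s2)^-1 * M1 `^ a * M2 `^ b =
  M1 `^ a * M2 `^ b / (a * s1 + b * s2).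
Proof. by rewrite -mulrA mulrC. Qed.

Lemma gt0_CIGF_le_mgf a b : 0 < a -> 0 < b -> 0 < a * s1 + b * s2 ->
  (CIGF X a b <= ((a * s1 + b * s2)^-1 * M1 `^ a * M2 `^ b)%:E)%E.
Proof.
move=> a_gt0 b_gt0 c_gt0; rewrite CIGF_itv0y scaled_mgf_powR.
apply: le_integral_scaled_expR; rewrite ?mulr_ge0 ?powR_ge0 //.
- by move=> x; rewrite mulr_ge0 ?powR_ge0.
- by move=> x x_gt0; apply: gt0_powR_mul_le; rewrite ?cdfR_pos.
Qed.

Lemma lt0_CIGF_ge_mgf a b : a < 0 -> b < 0 -> 0 < a * s1 + b * s2 ->
  (((a * s1 + b * s2)^-1 * M1 `^ a * M2 `^ b)%:E <= CIGF X a b)%E.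
Proof.
move=> a_lt0 b_lt0 c_gt0; rewrite CIGF_itv0y scaled_mgf_powR.
apply: ge_integral_scaled_expR; rewrite ?mulr_ge0 ?powR_ge0 //.
by move=> x x_gt0; apply: lt0_powR_mul_ge; rewrite ?cdfR_pos.
Qed.

End CIGF_mgf_bounds.

Theorem corollary1 (d : measure_display) (T : measurableType d) (R : realType)
  (P : probability T R) (X : {RV P >-> R}) (s0 : R) :
  (forall w, 0 <= X w) ->
  lsupp X = 0%:E -> rsupp X = +oo%E ->
  0 < s0 ->
  (forall s, - s0 < s < s0 -> (mgf X s < +oo)%E) ->
  (forall s1 s2 a b, - s0 < s1 < 0 -> 0 < s2 < s0 -> in_DX X a b ->
     0 < a -> 0 < b -> 0 < a * s1 + b * s2 ->
     (CIGF X a b <=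
       ((a * s1 + b * s2)^-1 * (fine (mgf X s1)) `^ a * (fine (mgf X s2)) `^ b)%:E)%E)
  /\
  (forall s1 s2 a b, - s0 < s1 < 0 -> 0 < s2 < s0 -> in_DX X a b ->
     a < 0 -> b < 0 -> 0 < a * s1 + b * s2 ->
     (((a * s1 + b * s2)^-1 * (fine (mgf X s1)) `^ a * (fine (mgf X s2)) `^ b)%:E
       <= CIGF X a b)%E).
Proof.
move=> _ lsupp0 rsuppy s0_gt0 mgf_fin.
have mgf_s1_fin s1 : - s0 < s1 < 0 -> (mgf X s1 < +oo)%E.
  by case/andP=> s0_lt_s1 s1_lt0; apply: mgf_fin; rewrite s0_lt_s1 (lt_trans s1_lt0).
have mgf_s2_fin s2 : 0 < s2 < s0 -> (mgf X s2 < +oo)%E.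
  case/andP=> s2_gt0 s2_lt_s0; apply: mgf_fin.
  by rewrite s2_lt_s0 andbT (lt_trans _ s2_gt0) ?oppr_lt0.
split=> s1 s2 a b s1_range s2_range _;
  have [[_ s1_lt0] [s2_gt0 _]] := (andP s1_range, andP s2_range).
- exact: (gt0_CIGF_le_mgf lsupp0 rsuppy s1_lt0 s2_gt0
           (mgf_s1_fin _ s1_range) (mgf_s2_fin _ s2_range)).
- exact: (lt0_CIGF_ge_mgf lsupp0 rsuppy s1_lt0 s2_gt0
           (mgf_s1_fin _ s1_range) (mgf_s2_fin _ s2_range)).
Qed.
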